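(* Let $F$ be a minimally unsatisfiable clause-set, $v$ an $m$-singular variable for $F$ ($m\ge1$), and $F' := \mathrm{DP}_v(F)$. 1. (a) If $m\ge2$, then $\mathrm{var}_s(F')\subseteq\mathrm{var}_s(F)$ and $\mathrm{var}_{1s}(F')\subseteq\mathrm{var}_{1s}(F)$. (b) If $m=1$, then $\mathrm{var}_{1s}(F')\setminus\mathrm{var}_{1s}(F)\subseteq\mathrm{var}_{\neg1s}(F)$. 2. (a) If $m=1$, then $\mathrm{var}_s(F)\setminus\{v\}\subseteq\mathrm{var}_s(F')$ and $\mathrm{var}_{1s}(F)\setminus\{v\}\subseteq\mathrm{var}_{1s}(F')$. (b) If $m\ge2$, then $\mathrm{var}_s(F)\setminus\mathrm{var}_s(F')\subseteq\mathrm{var}_{\neg1s}(F)$.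
   Context: Literals are variables $v$ and complements $\overline{v}$; a clause is a finite set of literals with no complementary pair; a clause-set is a finite set of clauses; $\mathrm{ldeg}_F(x)$ is the number of clauses of $F$ containing literal $x$, $\mathrm{vdeg}_F(v)=\mathrm{ldeg}_F(v)+\mathrm{ldeg}_F(\overline{v})$. $\mathrm{DP}_v(F) := \{C \in F : v \notin \mathrm{var}(C)\} \cup \{(C \cup D)\setminus\{v,\overline{v}\} : C, D \in F,\ C \cap \overline{D} = \{v\}\}$. A variable $v$ is singular for $F$ if $\min(\mathrm{ldeg}_F(v),\mathrm{ldeg}_F(\overline{v}))=1$, and $m$-singular if additionally $\mathrm{vdeg}_F(v)-1=m$. $\mathrm{var}_s(F)$ is the set of singular variables of $F$; $\mathrm{var}_{1s}(F):=\{v:\mathrm{ldeg}_F(v)=\mathrm{ldeg}_F(\overline{v})=1\}$ is the set of 1-singular variables; $\mathrm{var}_{\neg1s}(F):=\mathrm{var}_s(F)\setminus\mathrm{var}_{1s}(F)$ is the set of non-1-singular variables. *)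

From HB Require Import structures.
From mathcomp Require Import all_boot.
From mathcomp Require Import finmap.
Set Implicit Arguments. Unset Strict Implicit. Unset Printing Implicit Defensive.
Local Open Scope fset_scope.

Definition var_t := nat.
Definition lit := (nat * bool)%type.
Definition pos (v : nat) : lit := (v, true).
Definition neg (v : nat) : lit := (v, false).
Definition compl (x : lit) : lit := (x.1, ~~ x.2).

Definition clause := {fset lit}.
Definition clauseset := {fset clause}.

Definition is_clause (C : clause) : bool := [forall x : C, compl (val x) \notin C].
Definition is_clauseset (F : clauseset) : bool := [forall C : F, is_clause (val C)].

Definition var_cl (C : clause) : {fset nat} := [fset x.1 | x in C].
Definition complset (C : clause) : clause := [fset compl x | x in C].

Definition ldeg (F : clauseset) (x : lit) : nat := #|` [fset C in F | x \in C]|.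
Definition vdeg (F : clauseset) (v : nat) : nat := ldeg F (pos v) + ldeg F (neg v).

Definition DP (v : nat) (F : clauseset) : clauseset :=
  [fset C in F | v \notin var_cl C]
  `|` [fset ((C `|` D) `\` [fset pos v; neg v]) | C in F, D in F
         & C `&` complset D == [fset pos v]].

Definition sat_clause (phi : nat -> bool) (C : clause) : bool :=
  [exists x : C, phi (val x).1 == (val x).2].
Definition satisfiable (F : clauseset) : Prop :=
  exists phi : nat -> bool, forall C, C \in F -> sat_clause phi C.
Definition MU (F : clauseset) : Prop :=
  is_clauseset F /\ ~ satisfiable F /\
  forall G : clauseset, G `<` F -> satisfiable G.

Definition singular (F : clauseset) (v : nat) : Prop :=
  minn (ldeg F (pos v)) (ldeg F (neg v)) = 1.
Definition m_singular (F : clauseset) (m : nat) (v : nat) : Prop :=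
  singular F v /\ vdeg F v - 1 = m.
Definition in_var_s (F : clauseset) (v : nat) : Prop := singular F v.
Definition in_var_1s (F : clauseset) (v : nat) : Prop :=
  ldeg F (pos v) = 1 /\ ldeg F (neg v) = 1.
Definition in_var_n1s (F : clauseset) (v : nat) : Prop :=
  in_var_s F v /\ ~ in_var_1s F v.

From mathcomp Require Import all_boot.
From mathcomp Require Import finmap zify.
Set Implicit Arguments. Unset Strict Implicit. Unset Printing Implicit Defensive.
Local Open Scope fset_scope.

(* Let (v, b) be the literal of v occurring in the single clause C0, and
   D_1, ..., D_m the clauses containing its complement.  An assignment
   satisfying every clause but D_i (it exists by minimality) falsifies D_i and,
   since flipping v would otherwise satisfy F, every literal of C0 other than
   (v, b).  Hence C0 and D_i clash only in v, the resolvents of C0 with the D_i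
   are pairwise distinct, and none of them lies in F already.  So DP_v(F) is
   the disjoint union of the clauses of F without v and of these m resolvents:
   a literal of C0 other than (v, b) rises from degree r + 1 + d (d <= m) to
   degree r + m, its complement and every literal outside C0 keep their
   degree, and the corollary is arithmetic on these degrees. *)

Lemma complK x : compl (compl x) = x.
Proof. by case: x => a c; rewrite /compl /= negbK. Qed.

Lemma in_complset x C : (x \in complset C) = (compl x \in C).
Proof.
apply/imfsetP/idP => [[y yC ->]|xC]; first by rewrite complK.
by exists (compl x); rewrite ?complK.
Qed.

Lemma lit_same_var (x y : lit) : y.1 = x.1 -> y = x \/ y = compl x.
Proof. by case: x y => a c [a' c'] /= ->; case: c; case: c'; auto. Qed.

Lemma var_clP v C : reflect (exists2 x, x \in C & x.1 = v) (v \in var_cl C).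
Proof.
apply: (iffP idP) => [/imfsetP [x xC ->]|[x xC <-]]; first by exists x.
by apply/imfsetP; exists x.
Qed.

Lemma satP phi C : reflect (exists2 x, x \in C & phi x.1 = x.2) (sat_clause phi C).
Proof.
apply: (iffP existsP) => [[x /eqP phix]|[x xC phix]].
  by exists (val x) => //; exact: valP.
by exists [` xC]; apply/eqP.
Qed.

Lemma is_clause_compl C x : is_clause C -> x \in C -> compl x \notin C.
Proof. by move=> /forallP clC xC; apply: (clC [` xC]). Qed.

Lemma is_clauseset_mem F C : is_clauseset F -> C \in F -> is_clause C.
Proof. by move=> /forallP clF CF; apply: (clF [` CF]). Qed.

Lemma clash_single A B x : is_clause A -> x \in A -> compl x \in B ->
  (forall y, y \in A -> compl y \in B -> y.1 = x.1) -> A `&` complset B = [fset x].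
Proof.
move=> clA xA xB clash; apply/fsetP => y; rewrite in_fsetI in_complset in_fset1.
case: (eqVneq y x) => [->|yx]; first by rewrite xA xB.
apply/negbTE/andP => -[yA yB]; case: (lit_same_var (clash y yA yB)) => ye.
  by rewrite ye eqxx in yx.
by have := is_clause_compl clA xA; rewrite -ye yA.
Qed.

Lemma in_fset_sep (T : choiceType) (A : {fset T}) (P : pred T) x :
  (x \in [fset y in A | P y]) = (x \in A) && P x.
Proof. by rewrite !inE. Qed.

Lemma ldegU A B y : [disjoint A & B] -> ldeg (A `|` B) y = (ldeg A y + ldeg B y)%N.
Proof.
move=> AB; rewrite /ldeg -cardfsUI.
have /eqP -> : [fset C in A | y \in C] `&` [fset C in B | y \in C] == fset0.
  by apply: fdisjointWl (fdisjointWr _ AB); apply/fsubsetP => C; rewrite !inE => /andP[].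
rewrite cardfs0 addn0; congr #|` _|.
by apply/fsetP => C; rewrite !inE andb_orl.
Qed.

Lemma ldeg1 C y : ldeg [fset C] y = (y \in C : nat).
Proof.
rewrite /ldeg; case: (boolP (y \in C)) => yC.
  rewrite [RHS]/= -(cardfs1 C); congr #|` _|; apply/fsetP => D; rewrite !inE.
  by case: (eqVneq D C) => [->|].
apply/eqP; rewrite cardfs_eq0; apply/eqP/fsetP => D; rewrite !inE.
by case: (eqVneq D C) => [->|]; rewrite ?(negbTE yC).
Qed.

Lemma ldeg_imfset (f : clause -> clause) (X : clauseset) y : {in X &, injective f} ->
  ldeg (f @` X) y = #|` [fset x in X | y \in f x]|.
Proof.
move=> finj; rewrite /ldeg; have -> : [fset C in f @` X | y \in C] = f @` [fset x in X | y \in f x].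
  apply/fsetP => C; rewrite !inE; apply/andP/imfsetP => [[/imfsetP [x xX ->] yfx]|[x]].
    by exists x; rewrite // !inE xX.
  by rewrite !inE => /andP [xX yfx] ->; split => //; apply: in_imfset.
by apply: card_in_imfset => x1 x2; rewrite !inE => /andP [x1X _] /andP [x2X _]; apply: finj.
Qed.

Definition resolvent (v : nat) (C D : clause) : clause := (C `|` D) `\` [fset pos v; neg v].

Lemma in_resolvent v C D x :
  (x \in resolvent v C D) = (x.1 != v) && ((x \in C) || (x \in D)).
Proof.
rewrite !inE; case: x => a c /=; rewrite /pos /neg !xpair_eqE.
by case: (eqVneq a v) => //= _; case: c.
Qed.

Section SingularLiteral.
Variables (F : clauseset) (v : nat) (b : bool) (C0 : clause).
Hypotheses (muF : MU F) (C0F : C0 \in F) (vC0 : (v, b) \in C0)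
  (C0_unique : forall C, C \in F -> (v, b) \in C -> C = C0).

Local Notation Rest := [fset C in F | v \notin var_cl C].
Local Notation Ds := [fset D in F | (v, ~~ b) \in D].

Lemma is_clause_C0 : is_clause C0.
Proof. exact: is_clauseset_mem muF.1 C0F. Qed.

(* Were [C0] satisfied off [v], setting [v] to [~~ b] would satisfy [D] while
   keeping every other clause satisfied, as only [C0] relies on [(v, b)]. *)
Lemma sat_but_one_falsifies D : D \in F -> (v, ~~ b) \in D ->
  exists phi, [/\ forall C, C \in F -> C != D -> sat_clause phi C,
    forall x, x \in D -> phi x.1 != x.2
    & forall x, x \in C0 -> x.1 != v -> phi x.1 != x.2].
Proof.
move=> DF vD; have [_ [unsatF minF]] := muF.
have [phi satFD] := minF _ (fproperD1 DF).
have {}satFD C : C \in F -> C != D -> sat_clause phi C.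
  by move=> CF CD; apply: satFD; rewrite in_fsetD1 CD.
have satF_D : sat_clause phi D -> False.
  by move=> satD; apply: unsatF; exists phi => C CF; case: (eqVneq C D) => [->|]; auto.
exists phi; split => // [x xD|x xC0 xv]; apply/negP => /eqP phix.
  by apply: satF_D; apply/satP; exists x.
pose phi' u := if u == v then ~~ b else phi u.
apply: unsatF; exists phi' => C CF; apply/satP.
case: (eqVneq C D) => [->|CD]; first by exists (v, ~~ b); rewrite // /phi' eqxx.
have /satP [y yC phiy] := satFD C CF CD.
case: (eqVneq y.1 v) => [yv|yv]; last by exists y; rewrite // /phi' (negbTE yv).
case: (lit_same_var (x := (v, b)) yv) => ye; rewrite ye in yC.
  by exists x; rewrite ?(C0_unique CF yC) // /phi' (negbTE xv).
by exists (compl (v, b)); rewrite // /phi' eqxx.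
Qed.

Lemma C0_clash_only_v D y : D \in F -> (v, ~~ b) \in D ->
  y \in C0 -> compl y \in D -> y.1 = v.
Proof.
move=> DF vD yC0 yD; apply/eqP/negPn/negP => yv.
have [phi [_ falsD falsC0]] := sat_but_one_falsifies DF vD.
have := falsD _ yD; have := falsC0 _ yC0 yv.
by rewrite /compl /=; case: (phi y.1); case: (y.2).
Qed.

Lemma resolvent_notin D : D \in F -> (v, ~~ b) \in D -> resolvent v C0 D \notin F.
Proof.
move=> DF vD; apply/negP => RF.
have [phi [satFD falsD falsC0]] := sat_but_one_falsifies DF vD.
have RD : resolvent v C0 D != D.
  by apply/eqP => RD; move: vD; rewrite -RD in_resolvent eqxx.
have /satP [x] := satFD _ RF RD; rewrite in_resolvent => /andP [xv /orP [xC0|xD]].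
  by apply/eqP; apply: falsC0.
by apply/eqP; apply: falsD.
Qed.

Lemma resolvent_inj : {in Ds &, injective (resolvent v C0)}.
Proof.
move=> D1 D2; rewrite !inE => /andP [D1F vD1] /andP [D2F vD2] R12.
apply/eqP/negPn/negP => D21; rewrite eq_sym in D21.
have [phi [satFD falsD1 falsC0]] := sat_but_one_falsifies D1F vD1.
have /satP [x xD2 phix] := satFD _ D2F D21.
case: (eqVneq x.1 v) => [xv|xv].
  case: (lit_same_var (x := (v, b)) xv) => xe.
    have := is_clause_compl (is_clauseset_mem muF.1 D2F) vD2.
    by rewrite /compl /= negbK -xe xD2.
  by move/eqP: phix; apply/negP/falsD1; rewrite xe.
have : x \in resolvent v C0 D1 by rewrite R12 in_resolvent xv xD2 orbT.
rewrite in_resolvent xv => /orP [xC0|xD1].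
  by have := falsC0 _ xC0 xv; rewrite phix eqxx.
by have := falsD1 _ xD1; rewrite phix eqxx.
Qed.

Lemma DP_singularE : DP v F = Rest `|` resolvent v C0 @` Ds.
Proof.
congr (_ `|` _); apply/fsetP => E; apply/imfset2P/imfsetP.
  move=> [C CF [D]]; rewrite inE /= => /andP [DF /eqP clCD] ->.
  have : pos v \in C `&` complset D by rewrite clCD in_fset1.
  rewrite in_fsetI in_complset => /andP [vC vD].
  case: b C0_unique => uniq.
    exists D; last by rewrite (uniq C).
    by rewrite !inE DF.
  exists C; last by rewrite (uniq D) // /resolvent fsetUC.
  by rewrite !inE CF.
move=> [D]; rewrite inE => /andP [DF vD] ->.
have clash := C0_clash_only_v DF vD.
have clC0 := is_clause_C0.
have clD := is_clauseset_mem muF.1 DF.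
case: b C0_unique vC0 clash clC0 vD => uniq vC clash clC0 vD.
  exists C0 => //; exists D => //.
  by rewrite !inE DF; apply/eqP/clash_single.
exists D => //; exists C0; last by rewrite /resolvent fsetUC.
rewrite !inE C0F; apply/eqP/clash_single => //.
by move=> y yD /clash; rewrite complK => /(_ yD).
Qed.

Lemma F_singular_partition : F = [fset C0] `|` (Rest `|` Ds).
Proof.
apply/fsetP => C; rewrite !inE; apply/idP/idP => [CF|].
  rewrite CF /=; case: (boolP (v \in var_cl C)) => [/var_clP [x xC xv]|]; last by rewrite orbT.
  case: (lit_same_var (x := (v, b)) xv) => xe; rewrite xe in xC.
    by rewrite (C0_unique CF xC) eqxx.
  by rewrite xC !orbT.
by case/orP => [/eqP ->|/orP [/andP []|/andP []]].
Qed.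

Lemma ldeg_F_singular y : ldeg F y = ((y \in C0) + ldeg Rest y + ldeg Ds y)%N.
Proof.
rewrite {1}F_singular_partition ldegU ?ldegU ?ldeg1 ?addnA //.
  apply/fdisjointP => C; rewrite !inE => /andP [_ vC].
  by apply/negP => /andP [_ vbC]; move/var_clP: vC; apply; exists (v, ~~ b).
rewrite fdisjoint1X !inE negb_or !negb_and C0F /=; apply/andP; split.
  by apply/negPn/var_clP; exists (v, b).
exact: is_clause_compl is_clause_C0 vC0.
Qed.

Lemma ldeg_DP_singular y :
  ldeg (DP v F) y = (ldeg Rest y + #|` [fset D in Ds | y \in resolvent v C0 D]|)%N.
Proof.
rewrite DP_singularE ldegU ?ldeg_imfset //; first exact: resolvent_inj.
apply/fdisjointP => C; rewrite !inE => /andP [CF _].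
by apply: contraL CF => /imfsetP [D]; rewrite !inE => /andP [DF vD] ->; apply: resolvent_notin.
Qed.

Lemma ldeg_DP_v c : ldeg (DP v F) (v, c) = 0.
Proof.
apply/eqP; rewrite ldeg_DP_singular addn_eq0 !cardfs_eq0; apply/andP; split;
  apply/eqP/fsetP => C; rewrite [in RHS]inE; apply/negP.
  by rewrite !inE => /andP [/andP [_ /var_clP vC] vcC]; apply: vC; exists (v, c).
by rewrite in_fset_sep in_resolvent eqxx andbF.
Qed.

Lemma ldeg_DP_notin_C0 y : y.1 != v -> y \notin C0 -> ldeg (DP v F) y = ldeg F y.
Proof.
move=> yv yC0; rewrite ldeg_DP_singular ldeg_F_singular (negbTE yC0); congr (_ + #|` _|)%N.
by apply/fsetP => D; rewrite !in_fset_sep in_resolvent yv (negbTE yC0).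
Qed.

Lemma ldeg_DP_in_C0 y : y.1 != v -> y \in C0 ->
  (ldeg F (v, ~~ b) <= ldeg (DP v F) y < ldeg F y + ldeg F (v, ~~ b))%N.
Proof.
move=> yv yC0; rewrite ldeg_DP_singular (ldeg_F_singular y) yC0.
have -> : [fset D in Ds | y \in resolvent v C0 D] = Ds.
  by apply/fsetP => D; rewrite in_fset_sep in_resolvent yv yC0 andbT.
have -> : ldeg F (v, ~~ b) = #|` Ds| by [].
rewrite /=; lia.
Qed.

Lemma ldeg_DP_var w : w != v ->
  let m := ldeg F (v, ~~ b) in let F' := DP v F in
  ldeg F' (pos w) = ldeg F (pos w) /\ ldeg F' (neg w) = ldeg F (neg w) \/
  (m <= ldeg F' (pos w) < ldeg F (pos w) + m)%N /\ ldeg F' (neg w) = ldeg F (neg w) \/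
  (m <= ldeg F' (neg w) < ldeg F (neg w) + m)%N /\ ldeg F' (pos w) = ldeg F (pos w).
Proof.
move=> wv m F'; have clC0 := is_clause_C0.
case: (boolP (pos w \in C0)) => [pC0|pC0].
  have nC0 : neg w \notin C0 := is_clause_compl clC0 pC0.
  by right; left; rewrite ldeg_DP_in_C0 ?ldeg_DP_notin_C0.
case: (boolP (neg w \in C0)) => [nC0|nC0].
  by right; right; rewrite ldeg_DP_in_C0 ?ldeg_DP_notin_C0.
by left; rewrite !ldeg_DP_notin_C0.
Qed.

End SingularLiteral.

Lemma m_singular_clause F m v : m_singular F m v ->
  exists b C0, [/\ C0 \in F, (v, b) \in C0,
    forall C, C \in F -> (v, b) \in C -> C = C0 & ldeg F (v, ~~ b) = m].
Proof.
rewrite /m_singular /singular /vdeg /pos /neg => -[sing degm].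
have [b [deg1 degb]] : exists b, ldeg F (v, b) = 1 /\ ldeg F (v, ~~ b) = m.
  by case: (eqVneq (ldeg F (v, true)) 1) => d1; [exists true | exists false] => /=; lia.
have /cardfs1P [C0 FvC0] : #|` [fset C in F | (v, b) \in C]| == 1 by apply/eqP.
have /[!in_fset_sep] /andP [C0F vC0] : C0 \in [fset C in F | (v, b) \in C].
  by rewrite FvC0 in_fset1.
exists b, C0; split=> // C CF vC.
by apply/eqP; rewrite -in_fset1 -FvC0 in_fset_sep CF.
Qed.

Theorem corollary25 (F : clauseset) (m v : nat) :
  MU F -> m_singular F m v -> 1 <= m ->
  let F' := DP v F in
  (* 1(a) *)
  (2 <= m ->
     (forall w, in_var_s F' w -> in_var_s F w) /\
     (forall w, in_var_1s F' w -> in_var_1s F w)) /\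
  (* 1(b) *)
  (m = 1 ->
     forall w, in_var_1s F' w -> ~ in_var_1s F w -> in_var_n1s F w) /\
  (* 2(a) *)
  (m = 1 ->
     (forall w, in_var_s F w -> w <> v -> in_var_s F' w) /\
     (forall w, in_var_1s F w -> w <> v -> in_var_1s F' w)) /\
  (* 2(b) *)
  (2 <= m ->
     forall w, in_var_s F w -> ~ in_var_s F' w -> in_var_n1s F w).
Proof.
move=> muF msing _ F'; rewrite {}/F'.
have degv : (ldeg F (pos v) + ldeg F (neg v) = m + 1)%N.
  by move: msing; rewrite /m_singular /singular /vdeg; lia.
have [b [C0 [C0F vC0 C0_unique degm]]] := m_singular_clause msing.
have degF'v := ldeg_DP_v muF C0F vC0 C0_unique.
have degF'w := ldeg_DP_var muF C0F vC0 C0_unique.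
rewrite /in_var_n1s /in_var_s /in_var_1s /singular.
split; [|split; [|split]]; move=> m_range; [split| |split|] => w;
  case: (eqVneq w v) => [->|/degF'w]; rewrite /= ?degF'v ?degm; lia.
Qed.
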